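(* Let $\Bbbk$ be a commutative unital ring and $n \geq 1$, $d \geq 2$ integers. Define $\ell$ on the basis of $NC_A(n,d)$ from Theorem B by $\ell(T_w) = \ell_{A_{n-1}}(w)$ and $\ell(T_w T_n^k T_{n-1}\cdots T_m) = \ell_{A_{n-1}}(w) + k + n - m$ for $w \in S_n$, $k \in [1,d-1]$, $m \in [1,n]$. Then: (1) For every word $T_{i_1}\cdots T_{i_l}$ (with $i_j \in [1,n]$) that is nonzero in $NC_A(n,d)$, this word equals a single basis element $b$ of the form above, and $\ell(b) = l$. (2) There is a unique basis element of maximal $\ell$-value, namely $T_{w'_\circ} T_n^{d-1} T_{n-1}\cdots T_1$, of length $l_{n,d} := \ell_{A_{n-1}}(w'_\circ) + d + n - 2$; in particular every nonzero word in the $T_i$ has length at most $l_{n,d}$. (3) If $\Bbbk$ is a field, $NC_A(n,d)$ is a local algebra whose unique maximal ideal $\mathfrak{m}$ is the two-sided ideal generated by $T_1,\dots,T_n$. For every $\Bbbk$, this ideal $\mathfrak{m}$ satisfies $\mathfrak{m}^{1+l_{n,d}} = 0$.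
   Context: $NC_A(n,d)$ is the $\Bbbk$-algebra generated by $T_1,\dots,T_n$ with relations $T_iT_{i+1}T_i = T_{i+1}T_iT_{i+1}$ for $0<i<n$, $T_iT_j = T_jT_i$ for $|i-j|>1$, $T_1^2 = \cdots = T_{n-1}^2 = 0$, and $T_n^d = 0$. For $w \in S_n$ with reduced expression $w = s_{i_1}\cdots s_{i_r}$ in simple transpositions, $T_w := T_{i_1}\cdots T_{i_r}$; $\ell_{A_{n-1}}$ is the Coxeter length on $S_n$, and $w'_\circ$ is the longest element of $S_n$. By Theorem B the elements $T_w$ ($w \in S_n$) and $T_wT_n^kT_{n-1}\cdots T_m$ ($w\in S_n$, $k\in[1,d-1]$, $m\in[1,n]$) form a $\Bbbk$-basis of $NC_A(n,d)$. *)

From HB Require Import structures.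
From mathcomp Require Import all_boot all_order all_algebra all_fingroup.
From Stdlib Require Import ClassicalEpsilon.
Set Implicit Arguments. Unset Strict Implicit. Unset Printing Implicit Defensive.
Import GRing.Theory.

(* simple transposition s_i = (i i+1) of {1..n}, for 1 <= i <= n-1;
   on 'I_n (0-based) it swaps i-1 and i. *)
Definition sref (n i : nat) : 'S_n :=
  match n return 'S_n with
  | 0 => 1%g
  | n'.+1 => tperm (inord i.-1 : 'I_n'.+1) (inord i)
  end.

Definition permOf (n : nat) (u : seq nat) : 'S_n := (\prod_(i <- u) sref n i)%g.

Definition is_expr (n : nat) (w : 'S_n) (u : seq nat) : Prop :=
  all (fun i => 0 < i < n) u /\ permOf n u = w.

Definition is_redexpr (n : nat) (w : 'S_n) (u : seq nat) : Prop :=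
  is_expr w u /\ forall u', is_expr w u' -> size u <= size u'.

Definition redword (n : nat) (w : 'S_n) : seq nat :=
  epsilon (inhabits [::]) (is_redexpr w).

Definition coxlen (n : nat) (w : 'S_n) : nat := size (redword w).

Definition longest (n : nat) : 'S_n := [arg max_(w > 1%g) coxlen w].

Local Open Scope ring_scope.

Definition word (A : pzRingType) (t : nat -> A) (u : seq nat) : A :=
  \prod_(i <- u) t i.

Definition NC_rels (B : pzRingType) (n d : nat) (t : nat -> B) : Prop :=
  [/\ (forall i, (0 < i < n)%N -> t i * t i.+1 * t i = t i.+1 * t i * t i.+1),
      (forall i j, (0 < i <= n)%N -> (0 < j <= n)%N -> ((i.+1 < j) || (j.+1 < i))%N ->
                   t i * t j = t j * t i),
      (forall i, (0 < i < n)%N -> t i * t i = 0) &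
      t n ^+ d = 0].

(* phi : k -> A makes A a k-algebra (phi lands in the centre) *)
Definition central_map (R : comPzRingType) (A : pzRingType)
  (phi : {rmorphism R -> A}) : Prop := forall r x, phi r * x = x * phi r.

(* (A, phi, t) is the k-algebra generated by t_1..t_n subject to the
   relations of NC_A(n,d), i.e. the algebra presented by these generators
   and relations: the relations hold, A is generated as a k-algebra
   by the t_i, and (A, t) has the universal property. *)
Definition is_NC_A (R : comPzRingType) (n d : nat) (A : pzRingType)
  (phi : {rmorphism R -> A}) (t : nat -> A) : Prop :=
  [/\ central_map phi,
      NC_rels n d t,
      (forall a : A, exists c : seq (R * seq nat),
          all (fun p => all (fun i => (0 < i <= n)%N) p.2) c /\
          a = \sum_(p <- c) phi p.1 * word t p.2) &
      (forall (B : pzRingType) (psi : {rmorphism R -> B}) (s : nat -> B),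
          central_map psi -> NC_rels n d s ->
          exists f : {rmorphism A -> B},
            (forall r, f (phi r) = psi r) /\
            (forall i, (0 < i <= n)%N -> f (t i) = s i))].

(* index of a basis element: inl w  ~  T_w ;
   inr (w, k, m)  ~  T_w T_n^k T_{n-1} ... T_m *)
Definition bindex (n : nat) : Type := ('S_n + ('S_n * nat * nat))%type.

Definition valid_bindex (n d : nat) (b : bindex n) : bool :=
  match b with
  | inl _ => true
  | inr (_, k, m) => ((0 < k <= d.-1) && (0 < m <= n))%N
  end.

Definition tailword (n k m : nat) : seq nat := nseq k n ++ rev (iota m (n - m)%N).

Definition basis_elt (n : nat) (A : pzRingType) (t : nat -> A) (b : bindex n) : A :=
  match b with
  | inl w => word t (redword w)
  | inr (w, k, m) => word t (redword w ++ tailword n k m)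
  end.

Definition ell (n : nat) (b : bindex n) : nat :=
  match b with
  | inl w => coxlen w
  | inr (w, k, m) => (coxlen w + k + (n - m))%N
  end.

Definition top_bindex (n d : nat) : bindex n := inr (longest n, d.-1, 1).

Definition lnd (n d : nat) : nat := (coxlen (longest n) + d + n - 2)%N.

Definition left_ideal (A : pzRingType) (I : A -> Prop) : Prop :=
  [/\ I 0, (forall x y, I x -> I y -> I (x + y)) & (forall a x, I x -> I (a * x))].

Definition max_left_ideal (A : pzRingType) (I : A -> Prop) : Prop :=
  [/\ left_ideal I, ~ I 1 &
      forall J : A -> Prop, left_ideal J -> ~ J 1 ->
        (forall x, I x -> J x) -> forall x, J x -> I x].

Definition local_with_max (A : pzRingType) (m : A -> Prop) : Prop :=
  max_left_ideal m /\
  forall J : A -> Prop, max_left_ideal J -> forall x, J x <-> m x.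

Definition gen_ideal (A : pzRingType) (n : nat) (t : nat -> A) (x : A) : Prop :=
  exists s : seq (A * nat * A),
    (forall p, List.In p s -> (0 < p.1.2 <= n)%N) /\
    x = \sum_(p <- s) p.1.1 * t p.1.2 * p.2.

Definition ideal_pow (A : pzRingType) (I : A -> Prop) (N : nat) (x : A) : Prop :=
  exists s : seq (seq A),
    (forall xs, List.In xs s -> size xs = N /\ forall y, List.In y xs -> I y) /\
    x = \sum_(xs <- s) \prod_(y <- xs) y.

From HB Require Import structures.
From mathcomp Require Import all_boot all_order all_algebra all_fingroup.
From mathcomp Require Import zify.
From Stdlib Require Import ClassicalEpsilon.
Import GRing.Theory.
Set Implicit Arguments. Unset Strict Implicit. Unset Printing Implicit Defensive.

(* Right multiplication by a generator T_i sends every basis element of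
   Theorem B to 0 or to a basis element whose ell-value is one larger, so by
   induction a word of length l is 0 or a basis element of ell-value l.  On the
   T_w part this is T_w T_i = T_{w s_i} when i is an ascent of w and 0 otherwise
   (as T_i^2 = 0); it rests on Matsumoto's theorem that the braid and
   commutation relations identify the products along all reduced expressions
   of w, with the Coxeter length computed as the number of inversions.  On the
   tail T_n^k T_{n-1} ... T_m, the generator T_i commutes or braids through, or
   lowers m, or creates T_i^2 = 0 or T_n^2 T_{n-1} T_n = 0.  The maximum of ell
   is attained only at the longest element with k = d-1 and m = 1, hence every
   word longer than l_{n,d} vanishes, and so does the (1+l_{n,d})-th power of
   the ideal generated by the T_i, every element of which is a combination of
   words of length at least 1+l_{n,d}.  Over a field every element is a scalar
   plus an element of this nilpotent ideal, which makes the algebra local. *)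

Section SimpleTranspositions.

Variable m : nat.
Local Notation n := m.+1.

Lemma srefE i (x : 'I_n) : 0 < i < n ->
  nat_of_ord (sref n i x) = if x == i.-1 :> nat then i else if x == i :> nat then i.-1 else x.
Proof.
move=> /andP[i0 i_lt]; rewrite /sref.
have v1 : (inord i.-1 : 'I_n) = i.-1 :> nat by rewrite inordK //; lia.
have v2 : (inord i : 'I_n) = i :> nat by rewrite inordK.
case: tpermP => [->|->|x1 x2]; rewrite ?v1 ?v2 ?eqxx //.
  by have -> : (i == i.-1) = false by apply/eqP; lia.
have -> : (x == i.-1 :> nat) = false by apply/eqP => e; apply: x1; apply/val_inj; rewrite /= v1.
by have -> : (x == i :> nat) = false by apply/eqP => e; apply: x2; apply/val_inj; rewrite /= v2.
Qed.

Lemma sref_inordE i k : 0 < i < n -> k < n ->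
  sref n i (inord k) = inord (if k == i.-1 then i else if k == i then i.-1 else k).
Proof.
move=> hi hk; apply/val_inj; rewrite /= srefE // inordK //.
by case/andP: hi => ? ?; rewrite inordK //; case: eqP => //; case: eqP => //; lia.
Qed.

Lemma sref_inord_pred i : 0 < i < n -> sref n i (inord i.-1) = inord i.
Proof. by move=> hi; rewrite sref_inordE ?eqxx //; case/andP: hi => ? ?; lia. Qed.

Lemma sref_inord i : 0 < i < n -> sref n i (inord i) = inord i.-1.
Proof.
move=> hi; rewrite sref_inordE ?eqxx //; last by case/andP: hi.
by have -> : (i == i.-1) = false by apply/eqP; case/andP: hi => ? ?; lia.
Qed.

Lemma sref_inord_id i k : 0 < i < n -> k < n -> k != i.-1 -> k != i ->
  sref n i (inord k) = inord k.
Proof. by move=> hi hk h1 h2; rewrite sref_inordE // (negbTE h1) (negbTE h2). Qed.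

Lemma sref2 i : (sref n i * sref n i = 1)%g.
Proof. exact: tperm2. Qed.

Lemma mulg_srefK (w : 'S_n) i : (w * sref n i * sref n i)%g = w.
Proof. by rewrite -mulgA sref2 mulg1. Qed.

Lemma srefV i : ((sref n i)^-1 = sref n i)%g.
Proof. exact: tpermV. Qed.

Ltac case_innermost_eqs :=
  repeat match goal with |- context [?c == ?d] =>
    lazymatch c with context [if _ then _ else _] => fail | _ =>
    lazymatch d with context [if _ then _ else _] => fail | _ =>
    case: (c =P d) => ? /= end end end.

Lemma sref_commute i j : 0 < i < n -> 0 < j < n -> (i.+1 < j) || (j.+1 < i) ->
  (sref n i * sref n j = sref n j * sref n i)%g.
Proof.
move=> /andP[? ?] /andP[? ?] hij; apply/permP => x; apply: ord_inj.
rewrite !permM !srefE; try lia; move: (nat_of_ord x) => k.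
by case_innermost_eqs; lia.
Qed.

Lemma sref_braid i : 0 < i -> i.+1 < n ->
  (sref n i * sref n i.+1 * sref n i = sref n i.+1 * sref n i * sref n i.+1)%g.
Proof.
move=> ? ?; apply/permP => x; apply: ord_inj.
rewrite !permM !srefE; try lia; move: (nat_of_ord x) => k.
by case_innermost_eqs; lia.
Qed.

Lemma permOf_rcons u i : permOf n (rcons u i) = (permOf n u * sref n i)%g.
Proof. by rewrite /permOf -cats1 big_cat big_seq1. Qed.

End SimpleTranspositions.

Section Inversions.

Variable m : nat.
Local Notation n := m.+1.
Implicit Types (w : 'S_n) (u : seq nat).

Definition inversions w : {set 'I_n * 'I_n} :=
  [set p : 'I_n * 'I_n | (p.1 < p.2) && (w p.2 < w p.1)].

Definition ninv w := #|inversions w|.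

(* In 'S_n the product w * s applies w first, so right multiplication by s_i
   swaps the values i-1 and i of w: i is a descent when the value i occurs left
   of the value i-1. *)
Definition descent w i := (w^-1)%g (inord i) < (w^-1)%g (inord i.-1).

Definition descent_pair w i : 'I_n * 'I_n :=
  let p := (w^-1)%g (inord i.-1) in let q := (w^-1)%g (inord i) in
  if p < q then (p, q) else (q, p).

Lemma sref_ltE i (x y : 'I_n) : 0 < i < n -> x != y ->
  (sref n i y < sref n i x) =
  (y < x) (+) ((x == i.-1 :> nat) && (y == i :> nat) || (x == i :> nat) && (y == i.-1 :> nat)).
Proof.
move=> hi hxy; rewrite !srefE //.
have : nat_of_ord x != y by [].
move: (nat_of_ord x) (nat_of_ord y) => a b; case/andP: hi => ? ? hab.
by case: (a =P i.-1); case: (a =P i); case: (b =P i.-1); case: (b =P i) => /=; lia.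
Qed.

Lemma permV_eqE w z k : k < n -> (w z == k :> nat) = (z == (w^-1)%g (inord k)).
Proof. by move=> hk; rewrite -(inj_eq (@perm_inj _ w)) permKV -val_eqE /= inordK. Qed.

Lemma descent_pair_neq w i : 0 < i < n -> (w^-1)%g (inord i.-1) != (w^-1)%g (inord i).
Proof.
move=> /andP[? ?]; rewrite (inj_eq (@perm_inj _ _)) -val_eqE /= !inordK //; lia.
Qed.

Lemma in_inversions_mulsref w i x y : 0 < i < n ->
  ((x, y) \in inversions (w * sref n i)%g) =
  ((x, y) \in inversions w) (+) ((x, y) == descent_pair w i).
Proof.
move=> hi; have hne := descent_pair_neq w hi.
have [? ?] := andP hi.
rewrite !inE /= !permM /descent_pair.
case: (ltnP x y) => hxy /=.
  have hwxy : w x != w y by rewrite (inj_eq (@perm_inj _ _)) neq_ltn hxy.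
  rewrite sref_ltE // !permV_eqE; try lia; congr (_ (+) _).
  move: hne hxy; move: ((w^-1)%g (inord i.-1)) ((w^-1)%g (inord i)) => p q hne hxy.
  rewrite neq_ltn in hne.
  case: ifP => hpq; rewrite xpair_eqE;
  case: (x =P p) => ?; case: (x =P q) => ?; case: (y =P p) => ?; case: (y =P q) => ? //=;
  subst; rewrite ?ltnn ?eqxx //= in hne hxy hpq *; lia.
move: hne; move: ((w^-1)%g (inord i.-1)) ((w^-1)%g (inord i)) => p q hne.
case: ifP => hpq; rewrite xpair_eqE; apply/esym/negbTE;
  apply/negP => /andP[/eqP ex /eqP ey]; subst x y.
  by rewrite ltnNge hxy in hpq.
by rewrite neq_ltn hpq /= ltnNge hxy in hne.
Qed.

Lemma descent_pairE w i : 0 < i < n -> (descent_pair w i \in inversions w) = descent w i.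
Proof.
move=> hi; have hne := descent_pair_neq w hi; have [? ?] := andP hi.
have ? : i.-1 < n by lia.
rewrite /descent_pair /descent; case: ifP => hpq; rewrite inE /= !permKV !inordK //.
  by rewrite hpq /= (leq_gtF (ltnW hpq)) ltnNge leq_pred.
by rewrite neq_ltn hpq /= in hne; rewrite hne /=; lia.
Qed.

Lemma inversions_mulsref w i : 0 < i < n ->
  inversions (w * sref n i)%g =
  if descent w i then inversions w :\ descent_pair w i else descent_pair w i |: inversions w.
Proof.
move=> hi; rewrite -descent_pairE //; apply/setP => [[x y]].
rewrite in_inversions_mulsref //.
case: (eqVneq (x, y) (descent_pair w i)) => [->|ne].
  by case: ifP => h; rewrite !inE ?eqxx ?h.
by case: ifP => h; rewrite !inE (negbTE ne) ?addbF.
Qed.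

Lemma ninv_descent w i : 0 < i < n -> descent w i -> ninv w = (ninv (w * sref n i)%g).+1.
Proof.
move=> hi hd; rewrite /ninv inversions_mulsref // hd (cardsD1 (descent_pair w i)).
by rewrite descent_pairE // hd.
Qed.

Lemma ninv_ascent w i : 0 < i < n -> ~~ descent w i -> ninv (w * sref n i)%g = (ninv w).+1.
Proof.
move=> hi hd; rewrite /ninv inversions_mulsref // (negbTE hd) cardsU1.
by rewrite descent_pairE // (negbTE hd).
Qed.

Lemma ninv1 : ninv 1%g = 0.
Proof.
apply/eqP; rewrite cards_eq0; apply/eqP/setP => [[x y]]; rewrite !inE /= !perm1.
by apply/negbTE/negP => /andP[h1 h2]; move: (ltn_trans h1 h2); rewrite ltnn.
Qed.

Lemma ninv_permOf_le u : all (fun i => 0 < i < n) u -> ninv (permOf n u) <= size u.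
Proof.
elim/last_ind: u => [|u a IH]; first by rewrite /permOf big_nil ninv1.
rewrite all_rcons => /andP[ha hu]; rewrite permOf_rcons size_rcons.
have := IH hu; case: (boolP (descent (permOf n u) a)) => hd.
  by have := ninv_descent ha hd; lia.
by rewrite ninv_ascent //; lia.
Qed.

End Inversions.

Lemma bounded_incr_id N (g : nat -> nat) : (forall j, j <= N -> g j <= N) ->
  (forall j, 0 < j <= N -> g j.-1 < g j) -> forall j, j <= N -> g j = j.
Proof.
move=> g_le g_incr.
have ge_id j : j <= N -> j <= g j.
  by elim: j => [|j IH] hj //; have := g_incr j.+1 (ltac:(lia)); have := IH (ltnW hj) => /=; lia.
have le_id k : k <= N -> g (N - k) <= N - k.
  elim: k => [|k IH] hk; first by rewrite subn0 g_le.
  have := g_incr (N - k) (ltac:(lia)); have := IH (ltac:(lia)).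
  have -> : (N - k).-1 = N - k.+1 by lia.
  lia.
by move=> j hj; have := ge_id j hj; have := le_id (N - j) (leq_subr _ _); rewrite subKn //; lia.
Qed.

Section ReducedExpressions.

Variable m : nat.
Local Notation n := m.+1.
Implicit Types (w : 'S_n) (u : seq nat).

Lemma permV_mulsref w i x : ((w * sref n i)^-1)%g x = (w^-1)%g (sref n i x).
Proof. by rewrite invMg permM srefV. Qed.

Lemma descent_mulsref_far w a b : 0 < a < n -> 0 < b < n -> (a.+1 < b) || (b.+1 < a) ->
  descent w a -> descent (w * sref n b)%g a.
Proof.
move=> ha hb hab; have [? ?] := andP ha; have [? ?] := andP hb.
by rewrite /descent !permV_mulsref !sref_inord_id //; apply/eqP; lia.
Qed.

Lemma descent_mulsref_braid w a : 0 < a -> a.+1 < n -> descent w a -> descent w a.+1 ->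
  descent (w * sref n a)%g a.+1 /\ descent (w * sref n a * sref n a.+1)%g a.
Proof.
move=> ? ?; have ha : 0 < a < n by lia.
have ha1 : 0 < a.+1 < n by lia.
have e1 : sref n a (inord a.+1) = inord a.+1 by apply: sref_inord_id => //; apply/eqP; lia.
have e2 : sref n a.+1 (inord a.-1) = inord a.-1 by apply: sref_inord_id => //; try apply/eqP; lia.
rewrite /descent !permV_mulsref e1 e2 (sref_inord ha) (sref_inord_pred ha1) e1.
rewrite (sref_inord_pred ha) /=.
by move=> d1 d2; split; first exact: ltn_trans d2 d1.
Qed.

(* Equivalent to [is_redexpr] by [redword_reduced]; measuring the length by
   [ninv] avoids quantifying over all expressions of w. *)
Definition reduced w u :=
  [/\ all (fun i => 0 < i < n) u, permOf n u = w & size u = ninv w].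

Lemma reduced_rcons w u a : reduced w (rcons u a) -> descent w a /\ reduced (w * sref n a)%g u.
Proof.
case; rewrite all_rcons size_rcons => /andP[ha hu] hw hs.
have hw' : (w * sref n a)%g = permOf n u by rewrite -hw permOf_rcons mulg_srefK.
have hle := ninv_permOf_le hu; rewrite -hw' in hle.
case: (boolP (descent w a)) => hd.
  by have := ninv_descent ha hd; split => //; split => //; lia.
by have := ninv_ascent ha hd; lia.
Qed.

Lemma reduced_rcons_descent w u a : 0 < a < n -> descent w a ->
  reduced (w * sref n a)%g u -> reduced w (rcons u a).
Proof.
move=> ha hd [hu hw hs]; split; first by rewrite all_rcons ha.
  by rewrite permOf_rcons hw mulg_srefK.
by rewrite size_rcons hs (ninv_descent ha hd).
Qed.

Lemma reduced_rcons_ascent w u a : 0 < a < n -> ~~ descent w a ->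
  reduced w u -> reduced (w * sref n a)%g (rcons u a).
Proof.
move=> ha hd [hu hw hs]; split; first by rewrite all_rcons ha.
  by rewrite permOf_rcons hw.
by rewrite size_rcons hs (ninv_ascent ha hd).
Qed.

Definition position w j : nat := (w^-1)%g (inord j).

Lemma position_le w j : position w j <= m.
Proof. by rewrite -ltnS ltn_ord. Qed.

Lemma position_pred_neq w j : 0 < j <= m -> position w j.-1 != position w j.
Proof.
move=> hj; apply/negP => /eqP/ord_inj/perm_inj/(congr1 val) /=; rewrite !inordK; lia.
Qed.

Lemma eq_position w w' : (forall j, j <= m -> position w j = position w' j) -> w = w'.
Proof.
move=> h; apply: invg_inj; apply/permP => x; apply: ord_inj.
by have := h x (ltnSE (ltn_ord x)); rewrite /position inord_val.
Qed.

(* Without descents the position map is increasing, with only descents it is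
   decreasing; either way it is determined. *)
Lemma no_descent_eq1 w : (forall a, 0 < a < n -> ~~ descent w a) -> w = 1%g.
Proof.
have pos_id w0 : (forall a, 0 < a < n -> ~~ descent w0 a) -> forall j, j <= m -> position w0 j = j.
  move=> h0; apply: bounded_incr_id => [j _|k hk]; first exact: position_le.
  have := h0 k (ltac:(lia)); rewrite /descent -leqNgt -/(position w0 k.-1) -/(position w0 k) => hle.
  by rewrite ltn_neqAle position_pred_neq // hle //; lia.
move=> h; apply: eq_position => j hj; rewrite !pos_id // => a ha.
by rewrite /descent invg1 !perm1 !inordK; lia.
Qed.

Lemma all_descent_uniq w w' : (forall a, 0 < a < n -> descent w a) ->
  (forall a, 0 < a < n -> descent w' a) -> w = w'.
Proof.
have pos_rev w0 : (forall a, 0 < a < n -> descent w0 a) ->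
    forall j, j <= m -> position w0 j = m - j.
  move=> h0 j hj; have hb := position_le w0.
  suff : m - position w0 j = j by have := hb j; lia.
  apply: (@bounded_incr_id m (fun k => m - position w0 k)) => // [k _|k hk]; first exact: leq_subr.
  have := h0 k (ltac:(lia)); rewrite /descent -/(position w0 k.-1) -/(position w0 k).
  by have := hb k; have := hb k.-1; lia.
by move=> h h'; apply: eq_position => j hj; rewrite (pos_rev w) // (pos_rev w').
Qed.

Lemma reduced_exists w : exists u, reduced w u.
Proof.
move: {2}(ninv w) (erefl (ninv w)) => k; elim: k w => [|k IH] w hk.
  have nd a : 0 < a < n -> ~~ descent w a.
    by move=> ha; apply/negP => /(ninv_descent ha); lia.
  by exists [::]; rewrite (no_descent_eq1 nd) /reduced /permOf big_nil ninv1.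
have [/existsP[a /andP[a0 hd]]|hno] := boolP [exists a : 'I_n, (0 < a) && descent w a].
  have ha : 0 < a < n by rewrite a0 ltn_ord.
  have [u hu] := IH (w * sref n a)%g (ltac:(have := ninv_descent ha hd; lia)).
  by exists (rcons u a); apply: reduced_rcons_descent.
have nd a : 0 < a < n -> ~~ descent w a.
  move=> /andP[a0 an]; apply/negP => hd; move/existsP: hno; apply.
  by exists (Ordinal an); rewrite /= a0 hd.
by move: hk; rewrite (no_descent_eq1 nd) ninv1.
Qed.

(* A chosen reduced expression has minimal length, and [ninv] is a lower
   bound for the length of any expression; so the two agree. *)
Lemma redword_reduced w : reduced w (redword w).
Proof.
have [u [hu1 hu2 hu3]] := reduced_exists w.
have ex : exists u, is_redexpr w u.
  exists u; split=> [|u' [h1 h2]]; first by split.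
  by rewrite hu3 -h2; exact: ninv_permOf_le.
have [[h1 h2] hmin] := epsilon_spec (inhabits [::]) _ ex.
split => //; have := hmin u (conj hu1 hu2); have := ninv_permOf_le h1.
by rewrite -/(redword w) h2 hu3; lia.
Qed.

Lemma coxlen_ninv w : coxlen w = ninv w.
Proof. by case: (redword_reduced w). Qed.

Lemma ninv_le_longest w : ninv w <= ninv (longest n).
Proof.
rewrite -!coxlen_ninv /longest.
by case: (@arg_maxnP _ 1%g xpredT (@coxlen n) isT) => L _; apply.
Qed.

Lemma ninv_longest_descent w : ninv w = ninv (longest n) -> forall a, 0 < a < n -> descent w a.
Proof.
move=> e a ha; apply/negPn/negP => hd.
by have := ninv_ascent ha hd; have := ninv_le_longest (w * sref n a)%g; lia.
Qed.

Lemma ninv_longest_eq w : ninv w = ninv (longest n) -> w = longest n.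
Proof. by move=> e; apply: all_descent_uniq; apply: ninv_longest_descent. Qed.

End ReducedExpressions.

Section Words.

Variables (A : pzRingType) (t : nat -> A).

Lemma word_nil : word t [::] = 1%R.
Proof. by rewrite /word big_nil. Qed.

Lemma word_cat u v : word t (u ++ v) = (word t u * word t v)%R.
Proof. by rewrite /word big_cat. Qed.

Lemma word_rcons u a : word t (rcons u a) = (word t u * t a)%R.
Proof. by rewrite -cats1 word_cat /word big_seq1. Qed.

Lemma word_nseq k i : word t (nseq k i) = (t i ^+ k)%R.
Proof.
by elim: k => [|k IH]; rewrite ?word_nil ?expr0 // /= /word big_cons -/(word t _) IH exprS.
Qed.

End Words.

Section Matsumoto.

Variables (m : nat) (A : pzRingType) (t : nat -> A).
Local Notation n := m.+1.

Hypothesis t_braid : forall i, 0 < i < n -> (t i * t i.+1 * t i = t i.+1 * t i * t i.+1)%R.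
Hypothesis t_far : forall i j, 0 < i <= n -> 0 < j <= n -> (i.+1 < j) || (j.+1 < i) ->
  (t i * t j = t j * t i)%R.

Section InductionStep.

Variable k : nat.
Hypothesis IHk : forall (w : 'S_n) u v,
  size u = k -> reduced w u -> reduced w v -> word t u = word t v.

Lemma word_reduced_rcons (w : 'S_n) u v a : size u = k ->
  reduced w (rcons u a) -> reduced w (rcons v a) -> word t (rcons u a) = word t (rcons v a).
Proof.
move=> su /reduced_rcons[_ ru] /reduced_rcons[_ rv].
by rewrite !word_rcons (IHk su ru rv).
Qed.

Lemma matsumoto_far_step (w : 'S_n) u v a b : 0 < a < n -> 0 < b < n -> (a.+1 < b) || (b.+1 < a) ->
  size u = k -> size v = k -> reduced w (rcons u a) -> reduced w (rcons v b) ->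
  word t (rcons u a) = word t (rcons v b).
Proof.
move=> ha hb hab su sv ru rv.
have hba : (b.+1 < a) || (a.+1 < b) by rewrite orbC.
have [da _] := reduced_rcons ru; have [db _] := reduced_rcons rv.
have ninv_a := ninv_descent ha da.
have ninv_b := ninv_descent hb (descent_mulsref_far hb ha hba db).
have [x [hx1 hx2 hx3]] := reduced_exists (w * sref n a * sref n b)%g.
have sx : (size x).+2 = ninv w by case: ru => _ _; rewrite size_rcons; lia.
rewrite (word_reduced_rcons su ru (v := rcons x b)); last first.
  split; first by rewrite !all_rcons ha hb hx1.
    by rewrite !permOf_rcons hx2 !mulg_srefK.
  by rewrite !size_rcons.
rewrite (word_reduced_rcons sv rv (v := rcons x a)); last first.
  split; first by rewrite !all_rcons ha hb hx1.
    rewrite !permOf_rcons hx2 -[LHS]mulgA (sref_commute ha hb hab).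
    by rewrite mulgA !mulg_srefK.
  by rewrite !size_rcons.
rewrite !word_rcons -!mulrA (t_far (i := b)) //; lia.
Qed.

Lemma matsumoto_braid_step (w : 'S_n) u v a : 0 < a -> a.+1 < n ->
  size u = k -> size v = k -> reduced w (rcons u a) -> reduced w (rcons v a.+1) ->
  word t (rcons u a) = word t (rcons v a.+1).
Proof.
move=> a0 an su sv ru rv.
have ha : 0 < a < n by lia.
have ha1 : 0 < a.+1 < n by lia.
have [da _] := reduced_rcons ru; have [da1 _] := reduced_rcons rv.
have [d1 d2] := descent_mulsref_braid a0 an da da1.
have ninv_w := ninv_descent ha da.
have ninv_wa := ninv_descent ha1 d1.
have ninv_waa := ninv_descent ha d2.
have [x [hx1 hx2 hx3]] := reduced_exists (w * sref n a * sref n a.+1 * sref n a)%g.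
have sx : (size x).+3 = ninv w by case: ru => _ _; rewrite size_rcons; lia.
rewrite (word_reduced_rcons su ru (v := rcons (rcons x a) a.+1)); last first.
  split; first by rewrite !all_rcons ha ha1 hx1.
    by rewrite !permOf_rcons hx2 !mulg_srefK.
  by rewrite !size_rcons.
rewrite (word_reduced_rcons sv rv (v := rcons (rcons x a.+1) a)); last first.
  split; first by rewrite !all_rcons ha ha1 hx1.
    set s := sref n; rewrite !permOf_rcons hx2.
    have -> : (w * s a * s a.+1 * s a * s a.+1 * s a * s a.+1 =
               w * s a * s a.+1 * s a * (s a.+1 * s a * s a.+1))%g by rewrite !mulgA.
    by rewrite -sref_braid // !mulgA !mulg_srefK.
  by rewrite !size_rcons.
by rewrite !word_rcons -!mulrA; congr (_ * _)%R; rewrite !mulrA t_braid.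
Qed.

End InductionStep.

Theorem matsumoto (w : 'S_n) u v : reduced w u -> reduced w v -> word t u = word t v.
Proof.
move: {2}(size u) (erefl (size u)) => k; elim: k w u v => [|k IHk] w u v.
  move=> /size0nil-> [_ _ s0] [_ _ s1].
  by rewrite -s0 in s1; rewrite (size0nil s1).
case/lastP: u => [//|u a]; rewrite size_rcons => -[su] ru rv.
have [_ _ su'] := ru; have [_ _ sv'] := rv; rewrite size_rcons su -sv' in su'.
case/lastP: v rv sv' su' => [//|v b] rv _; rewrite size_rcons => -[/esym sv].
have [ha hb] : 0 < a < n /\ 0 < b < n.
  by case: ru rv => + _ _ [+ _ _]; rewrite !all_rcons => /andP[-> _] /andP[-> _].
case: (eqVneq a b) => [eab|nab].
  by rewrite -eab in rv *; exact: (word_reduced_rcons IHk su ru rv).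
case: (eqVneq b a.+1) => [eb|nba].
  by rewrite eb in rv *; apply: (matsumoto_braid_step IHk) ru rv; lia.
case: (eqVneq a b.+1) => [ea|nab1].
  by rewrite ea in ru *; symmetry; apply: (matsumoto_braid_step IHk) rv ru; lia.
by apply: (matsumoto_far_step IHk) ha hb _ su sv ru rv; lia.
Qed.

End Matsumoto.

Local Open Scope ring_scope.

Section NormalForm.

Variables (m d : nat) (A : pzRingType) (t : nat -> A).
Local Notation n := m.+1.

Hypothesis t_braid : forall i, (0 < i < n)%N -> t i * t i.+1 * t i = t i.+1 * t i * t i.+1.
Hypothesis t_far : forall i j, (0 < i <= n)%N -> (0 < j <= n)%N -> ((i.+1 < j) || (j.+1 < i))%N ->
  t i * t j = t j * t i.
Hypothesis t_sq : forall i, (0 < i < n)%N -> t i * t i = 0.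
Hypothesis t_top : t n ^+ d = 0.
Hypothesis d_gt1 : (1 < d)%N.

Definition tdown a b := word t (rev (iota a b)).

Lemma tdown0 a : tdown a 0 = 1.
Proof. exact: word_nil. Qed.

Lemma tdownS a b : tdown a b.+1 = tdown a.+1 b * t a.
Proof. by rewrite /tdown /= rev_cons word_rcons. Qed.

Lemma tdownSr a b : tdown a b.+1 = t (a + b)%N * tdown a b.
Proof. by rewrite /tdown -addn1 iotaD rev_cat word_cat /= /word big_seq1. Qed.

Lemma tdown_commute_low l a b : (0 < l)%N -> (l.+1 < a)%N -> (a + b <= n)%N ->
  t l * tdown a b = tdown a b * t l.
Proof.
elim: b a => [|b IH] a l0 la ab; first by rewrite tdown0 mulr1 mul1r.
by rewrite tdownS mulrA IH -?mulrA ?(t_far (i := l)) //; lia.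
Qed.

Lemma tdown_commute_high l a b : (0 < a)%N -> (a + b < l)%N -> (l <= n)%N ->
  t l * tdown a b = tdown a b * t l.
Proof.
elim: b a => [|b IH] a a0 ab ln; first by rewrite tdown0 mulr1 mul1r.
by rewrite tdownS mulrA IH -?mulrA ?(t_far (i := l)) //; lia.
Qed.

Lemma tdown_braid i a b : (0 < a)%N -> (a < i < a + b)%N -> (a + b <= n)%N ->
  tdown a b * t i = t i.-1 * tdown a b.
Proof.
elim: b a => [|b IH] a a0 ai ab; first by lia.
case: (eqVneq i a.+1) => [->|ia1].
  case: b IH ai ab => [|b] IH ai ab; first by lia.
  rewrite !tdownS.
  have -> : tdown a.+2 b * t a.+1 * t a * t a.+1 = tdown a.+2 b * (t a.+1 * t a * t a.+1).
    by rewrite !mulrA.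
  rewrite -t_braid; last by lia.
  by rewrite !mulrA -(tdown_commute_low (l := a)) //; lia.
rewrite tdownS -mulrA -(t_far (i := i)); try lia.
by rewrite mulrA IH ?mulrA //; lia.
Qed.

Lemma tdown_top j : (0 < j < n)%N -> tdown j (n - j) = t m * tdown j (n - j).-1.
Proof.
move=> hj; set b := (n - j).-1; have -> : (n - j = b.+1)%N by lia.
by rewrite tdownSr (_ : (j + b = m)%N) //; lia.
Qed.

Lemma tdown_top_mulr j : (0 < j < n)%N ->
  tdown j (n - j) * t n = t m * t n * tdown j (n - j).-1.
Proof.
by move=> hj; rewrite tdown_top // -mulrA -(tdown_commute_high (l := n)) ?mulrA //; lia.
Qed.

Lemma top2_braid_eq0 : (0 < m)%N -> t n * t n * t m * t n = 0.
Proof.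
move=> m0; have hm : (0 < m < n)%N by lia.
have -> : t n * t n * t m * t n = t n * (t n * t m * t n) by rewrite !mulrA.
by rewrite -t_braid // !mulrA -t_braid // -!mulrA t_sq // !mulr0.
Qed.

Lemma basis_elt_inr (w : 'S_n) k j :
  basis_elt t (inr (w, k, j)) = word t (redword w) * (t n ^+ k * tdown j (n - j)).
Proof. by rewrite /= /tailword !word_cat word_nseq. Qed.

Lemma redword_mulr (w : 'S_n) i : (0 < i < n)%N ->
  word t (redword w) * t i = if descent w i then 0 else word t (redword (w * sref n i)%g).
Proof.
move=> hi; case: ifP => hd.
  have r := reduced_rcons_descent hi hd (redword_reduced (w * sref n i)%g).
  by rewrite (matsumoto t_braid t_far (redword_reduced w) r) word_rcons -mulrA t_sq // mulr0.
have r := reduced_rcons_ascent hi (negbT hd) (redword_reduced w).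
by rewrite -word_rcons (matsumoto t_braid t_far r (redword_reduced _)).
Qed.

Definition basis_succ (b : bindex n) (x : A) : Prop :=
  x = 0 \/ exists b' : bindex n, [/\ valid_bindex d b', x = basis_elt t b' & ell b' = (ell b).+1].

Lemma basis_succ_redword_mulr (w : 'S_n) k j i : (0 < i < n)%N ->
  valid_bindex d (inr (w, k, j)) ->
  basis_succ (inr (w, k, j)) (word t (redword w) * t i * (t n ^+ k * tdown j (n - j))).
Proof.
move=> hi hv; rewrite redword_mulr //; case: ifP => hd; first by left; rewrite mul0r.
right; exists (inr ((w * sref n i)%g, k, j)); split; rewrite ?basis_elt_inr //=.
by rewrite !coxlen_ninv (ninv_ascent hi (negbT hd)); lia.
Qed.

Lemma basis_succ_inl (w : 'S_n) i : (0 < i <= n)%N ->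
  basis_succ (inl w) (basis_elt t (inl w) * t i).
Proof.
move=> hi; case: (eqVneq i n) => [->|ni].
  right; exists (inr (w, 1%N, n)); split; rewrite ?basis_elt_inr /=; try lia.
  by rewrite subnn tdown0 mulr1 expr1.
have hi' : (0 < i < n)%N by lia.
rewrite /= redword_mulr //; case: ifP => hd; [by left | right].
exists (inl (w * sref n i)%g); split => //.
by rewrite /= !coxlen_ninv (ninv_ascent hi' (negbT hd)).
Qed.

Lemma basis_succ_inr_top (w : 'S_n) k j : valid_bindex d (inr (w, k, j)) ->
  basis_succ (inr (w, k, j)) (basis_elt t (inr (w, k, j)) * t n).
Proof.
move=> hv; have /andP[/andP[k0 kd] /andP[j0 jn]] := hv; rewrite basis_elt_inr.
case: (eqVneq j n) => [->|nj].
  rewrite subnn tdown0 mulr1 -mulrA -exprSr.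
  case: (eqVneq k.+1 d) => [ek|nk]; first by left; rewrite ek t_top mulr0.
  right; exists (inr (w, k.+1, n)); split; rewrite ?basis_elt_inr /=; try lia.
  by rewrite subnn tdown0 mulr1.
have hj : (0 < j < n)%N by lia.
rewrite -!mulrA tdown_top_mulr //.
(* For k = 1 the braid relation moves T_{n-1} to the left of T_n; for k >= 2
   the factor T_n^2 T_{n-1} T_n vanishes. *)
case: k k0 kd hv => [//|[|k]] _ _ hv.
  have e : t n ^+ 1 * (t m * t n * tdown j (n - j).-1) = t m * (t n ^+ 1 * tdown j (n - j)).
    by rewrite (tdown_top hj) expr1 !mulrA -t_braid //; lia.
  by rewrite e mulrA; apply: basis_succ_redword_mulr => //; lia.
left; have -> : t n ^+ k.+2 * (t m * t n * tdown j (n - j).-1) =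
  t n ^+ k * (t n * t n * t m * t n) * tdown j (n - j).-1 by rewrite !exprSr !mulrA.
by rewrite top2_braid_eq0 ?mulr0 ?mul0r ?mulr0 //; lia.
Qed.

Lemma basis_succ_inr_low (w : 'S_n) k j i : valid_bindex d (inr (w, k, j)) -> (0 < i < n)%N ->
  basis_succ (inr (w, k, j)) (basis_elt t (inr (w, k, j)) * t i).
Proof.
move=> hv hi; have /andP[/andP[k0 kd] /andP[j0 jn]] := hv; rewrite basis_elt_inr.
have through_tail l : (0 < l)%N -> (l.+1 < n)%N -> tdown j (n - j) * t i = t l * tdown j (n - j) ->
    word t (redword w) * (t n ^+ k * tdown j (n - j)) * t i =
    word t (redword w) * t l * (t n ^+ k * tdown j (n - j)).
  move=> l0 ln e; rewrite -!mulrA e (mulrA (t n ^+ k)).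
  by rewrite -(commrX k (t_far (i := l) _ _ _)) ?mulrA //; lia.
case: (ltnP i.+1 j) => [hij|hji].
  rewrite (through_tail i) ?(tdown_commute_low (l := i)) //; try lia.
  exact: basis_succ_redword_mulr.
case: (eqVneq i.+1 j) => [ej|nj].
  right; exists (inr (w, k, i)); split; [rewrite /=; lia | | rewrite /=; lia].
  rewrite basis_elt_inr (_ : (n - i = (n - j).+1)%N); last by lia.
  by rewrite tdownS ej !mulrA.
case: (eqVneq i j) => [<-|nij].
  left; have -> : (n - i = (n - i.+1).+1)%N by lia.
  by rewrite tdownS -!mulrA t_sq // !mulr0.
rewrite (through_tail i.-1) ?(tdown_braid (a := j)) //; try lia.
by apply: basis_succ_redword_mulr; lia.
Qed.

Lemma basis_succ_mulr b i : valid_bindex d b -> (0 < i <= n)%N ->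
  basis_succ b (basis_elt t b * t i).
Proof.
case: b => [w|[[w k] j]] hv hi; first exact: basis_succ_inl.
case: (eqVneq i n) => [->|ni]; first exact: basis_succ_inr_top.
by apply: basis_succ_inr_low => //; lia.
Qed.

Lemma word_basis u : all (fun i => (0 < i <= n)%N) u ->
  word t u = 0 \/
  exists b : bindex n, [/\ valid_bindex d b, word t u = basis_elt t b & ell b = size u].
Proof.
elim/last_ind: u => [_|u i IH].
  right; exists (inl 1%g); rewrite /= coxlen_ninv ninv1; split=> //.
  by have [_ _] := redword_reduced (1%g : 'S_n); rewrite ninv1 => /size0nil ->.
rewrite all_rcons => /andP[hi hu]; rewrite word_rcons.
case: (IH hu) => [->|[b [hv -> hb]]]; first by left; rewrite mul0r.
case: (basis_succ_mulr hv hi) => [->|[b' [hv' e' hb']]]; [by left | right].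
by exists b'; rewrite size_rcons -hb.
Qed.

End NormalForm.

Section TopElement.

Variables (m d : nat).
Local Notation n := m.+1.
Hypothesis d_gt1 : (1 < d)%N.

Lemma top_bindex_valid : valid_bindex d (top_bindex n d).
Proof. by rewrite /=; lia. Qed.

Lemma ell_top_bindex : ell (top_bindex n d) = lnd n d.
Proof. by rewrite /= /lnd; lia. Qed.

Lemma ell_le_lnd (b : bindex n) : valid_bindex d b -> (ell b <= lnd n d)%N.
Proof.
by rewrite /lnd; case: b => [w|[[w k] j]] /=; have := ninv_le_longest w; rewrite -!coxlen_ninv; lia.
Qed.

Lemma ell_eq_lnd (b : bindex n) : valid_bindex d b -> ell b = lnd n d -> b = top_bindex n d.
Proof.
rewrite /lnd; case: b => [w|[[w k] j]] /=; have := ninv_le_longest w.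
  by rewrite -!coxlen_ninv; lia.
move=> hw hv; rewrite !coxlen_ninv => he; have ew : ninv w = ninv (longest n) by lia.
by rewrite (ninv_longest_eq ew) /top_bindex; congr (inr (_, _, _)); lia.
Qed.

End TopElement.

Section IdealPowers.

Variables (R : comPzRingType) (A : pzRingType) (phi : {rmorphism R -> A}) (t : nat -> A).
Variable N : nat.
Hypothesis phi_central : central_map phi.
Hypothesis phi_span : forall a : A, exists c : seq (R * seq nat),
  all (fun p => all (fun i => (0 < i <= N)%N) p.2) c /\ a = \sum_(p <- c) phi p.1 * word t p.2.

Inductive long_comb (k : nat) : A -> Prop :=
| long_comb0 : long_comb k 0
| long_combD x y : long_comb k x -> long_comb k y -> long_comb k (x + y)
| long_comb_word r u : all (fun i => (0 < i <= N)%N) u -> (k <= size u)%N ->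
    long_comb k (phi r * word t u).

Lemma long_combM j k x y : long_comb j x -> long_comb k y -> long_comb (j + k) (x * y).
Proof.
move=> hx hy; elim: hx => [|x1 x2 _ IH1 _ IH2|r u hu hsu]; first by rewrite mul0r; constructor.
  by rewrite mulrDl; constructor.
elim: hy => [|y1 y2 _ IH1 _ IH2|r' u' hu' hsu']; first by rewrite mulr0; constructor.
  by rewrite mulrDr; constructor.
have -> : phi r * word t u * (phi r' * word t u') = phi (r * r') * word t (u ++ u').
  by rewrite rmorphM word_cat !mulrA -(mulrA (phi r)) -phi_central !mulrA.
by constructor; rewrite ?all_cat ?hu ?size_cat //; lia.
Qed.

Lemma long_comb_span a : long_comb 0 a.
Proof.
have [c [hc ->]] := phi_span a; elim: c hc => [|p c IH] /=; first by rewrite big_nil; constructor.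
by case/andP=> hp hc; rewrite big_cons; constructor; [constructor | apply: IH].
Qed.

Lemma long_comb_gen i : (0 < i <= N)%N -> long_comb 1 (t i).
Proof.
move=> hi; have -> : t i = phi 1 * word t [:: i] by rewrite rmorph1 mul1r /word big_seq1.
by constructor; rewrite /= ?hi.
Qed.

Lemma long_comb_gen_ideal x : gen_ideal N t x -> long_comb 1 x.
Proof.
case=> s [hs ->]; elim: s hs => [|p s IH] hs; first by rewrite big_nil; constructor.
rewrite big_cons; constructor; last by apply: IH => q hq; apply: hs; right.
have := long_combM (long_combM (long_comb_span p.1.1) (long_comb_gen (hs p (or_introl erefl))))
  (long_comb_span p.2).
by rewrite addn0.
Qed.

Lemma long_comb_ideal_pow (I : A -> Prop) : (forall x, I x -> long_comb 1 x) ->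
  forall K x, ideal_pow I K x -> long_comb K x.
Proof.
move=> hI K x [s [hs ->]]; elim: s hs => [|xs s IH] hs; first by rewrite big_nil; constructor.
rewrite big_cons; constructor; last by apply: IH => q hq; apply: hs; right.
have [sz hxs] := hs xs (or_introl erefl); rewrite -sz {sz hs}; elim: xs hxs => [|y xs IHxs] hxs.
  have -> : \prod_(y <- [::]) y = phi 1 * word t [::] by rewrite big_nil rmorph1 word_nil mulr1.
  by constructor.
rewrite big_cons /= -add1n; apply: long_combM; first by apply: hI; apply: hxs; left.
by apply: IHxs => z hz; apply: hxs; right.
Qed.

Lemma long_comb_eq0 k x :
  (forall u, all (fun i => (0 < i <= N)%N) u -> (k <= size u)%N -> word t u = 0) ->
  long_comb k x -> x = 0.
Proof.
move=> h; elim=> [//|x1 x2 _ -> _ ->|r u hu hs]; first by rewrite addr0.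
by rewrite h // mulr0.
Qed.

End IdealPowers.

Section GeneratedIdeal.

Variables (A : pzRingType) (N : nat) (t : nat -> A).

Lemma gen_ideal0 : gen_ideal N t 0.
Proof. by exists [::]; rewrite big_nil. Qed.

Lemma gen_idealD x y : gen_ideal N t x -> gen_ideal N t y -> gen_ideal N t (x + y).
Proof.
move=> [s [hs ->]] [s' [hs' ->]]; exists (s ++ s'); rewrite big_cat; split=> // p.
by rewrite List.in_app_iff => -[/hs|/hs'].
Qed.

Lemma gen_idealMl a x : gen_ideal N t x -> gen_ideal N t (a * x).
Proof.
case=> s [hs ->]; exists [seq (a * p.1.1, p.1.2, p.2) | p <- s]; split.
  by move=> q /List.in_map_iff[p [<- /hs]].
rewrite big_map big_distrr /=.
by apply: eq_bigr => p _; rewrite !mulrA.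
Qed.

Lemma gen_ideal_gen a i b : (0 < i <= N)%N -> gen_ideal N t (a * t i * b).
Proof. by move=> hi; exists [:: (a, i, b)]; rewrite big_seq1; split=> // q [<-|]. Qed.

Lemma gen_ideal_left : left_ideal (gen_ideal N t).
Proof. by split; [exact: gen_ideal0 | exact: gen_idealD | exact: gen_idealMl]. Qed.

Lemma rmorph_gen_ideal (B : pzRingType) (f : {rmorphism A -> B}) :
  (forall i, (0 < i <= N)%N -> f (t i) = 0) -> forall x, gen_ideal N t x -> f x = 0.
Proof.
move=> f_t x [s [hs ->]]; elim: s hs => [|p s IH] hs; first by rewrite big_nil rmorph0.
rewrite big_cons rmorphD IH => [|q hq]; last by apply: hs; right.
by rewrite !rmorphM f_t ?mulr0 ?mul0r ?addr0 //; apply: hs; left.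
Qed.

End GeneratedIdeal.

Lemma nilpotent_add1_linv (A : pzRingType) (y : A) K : y ^+ K = 0 ->
  (\sum_(i < K) (- y) ^+ i) * (1 + y) = 1.
Proof.
have geom L : (\sum_(i < L) (- y) ^+ i) * (1 + y) = 1 - (- y) ^+ L.
  elim: L => [|L IH]; first by rewrite big_ord0 mul0r expr0 subrr.
  by rewrite big_ord_recr /= mulrDl IH exprSr mulrDr mulr1 mulrN opprK addrA subrK.
by move=> yK; rewrite geom exprNn yK mulr0 subr0.
Qed.

Section Locality.

Variables (R : comPzRingType) (A : pzRingType) (phi : {rmorphism R -> A}) (t : nat -> A).
Variable N : nat.
Hypothesis phi_span : forall a : A, exists c : seq (R * seq nat),
  all (fun p => all (fun i => (0 < i <= N)%N) p.2) c /\ a = \sum_(p <- c) phi p.1 * word t p.2.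

Variable f : {rmorphism A -> R}.
Hypothesis f_phi : forall r, f (phi r) = r.
Hypothesis f_t : forall i, (0 < i <= N)%N -> f (t i) = 0.

Lemma scalar_add_gen_ideal a : exists r y, gen_ideal N t y /\ a = phi r + y.
Proof.
have [c [hc ->]] := phi_span a; elim: c hc => [|[r0 [|i u]] c IH] /=.
- by exists 0, 0; rewrite big_nil rmorph0 addr0; split; first exact: gen_ideal0.
- move=> /IH[r [y [hy e]]]; exists (r0 + r), y; split=> //.
  by rewrite big_cons e word_nil mulr1 rmorphD addrA.
case/andP=> /andP[hi _] /IH[r [y [hy e]]]; exists r, (phi r0 * t i * word t u + y); split.
  by apply: gen_idealD => //; apply: gen_ideal_gen.
by rewrite big_cons e /word big_cons -/(word t u) !mulrA addrCA.
Qed.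

Lemma gen_ideal_ker x : f x = 0 -> gen_ideal N t x.
Proof.
have [r [y [hy ->]]] := scalar_add_gen_ideal x.
by rewrite rmorphD f_phi (rmorph_gen_ideal f_t hy) addr0 => ->; rewrite rmorph0 add0r.
Qed.

Hypothesis R_nontrivial : (1 : R) != 0.
Hypothesis R_inv : forall x : R, x != 0 -> exists y, y * x = 1.

Lemma gen_ideal_proper : ~ gen_ideal N t 1.
Proof. by move/(rmorph_gen_ideal f_t); rewrite rmorph1; apply/eqP. Qed.

(* Outside the kernel of [f] an element is an invertible scalar plus an element
   of the ideal, so a left ideal containing it contains some [1 + z]. *)
Lemma left_ideal_add1 (J : A -> Prop) x : left_ideal J -> J x -> f x != 0 ->
  exists z, gen_ideal N t z /\ J (1 + z).
Proof.
move=> [_ _ JM] Jx fx; have [r [y [hy ex]]] := scalar_add_gen_ideal x.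
have [r' hr'] : exists r', r' * r = 1.
  by apply: R_inv; move: fx; rewrite ex rmorphD f_phi (rmorph_gen_ideal f_t hy) addr0.
exists (phi r' * y); split; first exact: gen_idealMl.
by have := JM (phi r') x Jx; rewrite ex mulrDr -rmorphM hr' rmorph1.
Qed.

Lemma gen_ideal_max : max_left_ideal (gen_ideal N t).
Proof.
split=> [|| J [J0 JD JM] J1 sub x Jx]; [exact: gen_ideal_left | exact: gen_ideal_proper |].
have [/eqP/gen_ideal_ker //|fx] := boolP (f x == 0).
have [z [hz Jz]] := left_ideal_add1 (And3 J0 JD JM) Jx fx.
by case: J1; have := JD _ _ Jz (JM (-1) z (sub z hz)); rewrite mulN1r addrK.
Qed.

Hypothesis gen_ideal_nil : forall y, gen_ideal N t y -> exists K, y ^+ K = 0.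

Lemma proper_left_ideal_sub (J : A -> Prop) : left_ideal J -> ~ J 1 ->
  forall x, J x -> gen_ideal N t x.
Proof.
move=> hJ J1 x Jx; have [/eqP/gen_ideal_ker //|fx] := boolP (f x == 0).
have [z [hz Jz]] := left_ideal_add1 hJ Jx fx; have [K hK] := gen_ideal_nil hz.
case: J1; case: hJ => _ _ JM.
by have := JM (\sum_(i < K) (- z) ^+ i) _ Jz; rewrite nilpotent_add1_linv.
Qed.

Lemma gen_ideal_local : local_with_max (gen_ideal N t).
Proof.
split=> [|J [hJ J1 Jmax] x]; first exact: gen_ideal_max.
split; first exact: proper_left_ideal_sub.
exact: Jmax _ (gen_ideal_left N t) gen_ideal_proper (proper_left_ideal_sub hJ J1) x.
Qed.

End Locality.

Lemma ideal_pow_exprn (A : pzRingType) (I : A -> Prop) K y : I y -> ideal_pow I K (y ^+ K).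
Proof.
move=> Iy; exists [:: nseq K y]; rewrite big_seq1 big_nseq; split.
  move=> xs [<-|[]]; rewrite size_nseq; split=> // z.
  by elim: K => [//|K IH] /= [<-|/IH].
by elim: K => [|K IH]; rewrite ?expr0 // exprS IH.
Qed.

Lemma NC_rels_zero (R : pzRingType) n d : (0 < d)%N -> NC_rels n d (fun=> 0 : R).
Proof. by move=> d0; split=> *; rewrite ?mulr0 // expr0n; case: d d0. Qed.

Unset Implicit Arguments.

Theorem theoremC (R : comPzRingType) (n d : nat) (hn : (1 <= n)%N) (hd : (2 <= d)%N)
  (A : pzRingType) (phi : {rmorphism R -> A}) (t : nat -> A)
  (hA : is_NC_A n d phi t) :
  (* (1) *)
  (forall u : seq nat, all (fun i => (0 < i <= n)%N) u -> word t u != 0 ->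
     exists b : bindex n,
       [/\ valid_bindex d b, word t u = basis_elt t b & ell b = size u]) /\
  (* (2) *)
  ([/\ valid_bindex d (top_bindex n d),
       ell (top_bindex n d) = lnd n d,
       (forall b : bindex n, valid_bindex d b -> (ell b <= lnd n d)%N),
       (forall b : bindex n, valid_bindex d b -> ell b = lnd n d -> b = top_bindex n d) &
       (forall u : seq nat, all (fun i => (0 < i <= n)%N) u -> word t u != 0 ->
          (size u <= lnd n d)%N)]) /\
  (* (3) *)
  (((1 : R) != 0 /\ (forall x : R, x != 0 -> exists y, y * x = 1)) ->
     local_with_max (gen_ideal n t)) /\
  (forall x : A, ideal_pow (gen_ideal n t) (1 + lnd n d) x -> x = 0).
Proof.
case: n hn hA => [//|m] _ [phi_central [t_braid t_far t_sq t_top] phi_span univ].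
have nonzero_word u : all (fun i => (0 < i <= m.+1)%N) u -> word t u != 0 ->
    exists b : bindex m.+1, [/\ valid_bindex d b, word t u = basis_elt t b & ell b = size u].
  by move=> hu; case: (word_basis t_braid t_far t_sq t_top hd hu) => [->|//]; rewrite eqxx.
have size_le u : all (fun i => (0 < i <= m.+1)%N) u -> word t u != 0 -> (size u <= lnd m.+1 d)%N.
  by move=> hu /(nonzero_word u hu)[b [hv _ <-]]; apply: ell_le_lnd hd _ hv.
have pow_eq0 x : ideal_pow (gen_ideal m.+1 t) (1 + lnd m.+1 d) x -> x = 0.
  move/(long_comb_ideal_pow phi_central (long_comb_gen_ideal phi_central phi_span)).
  apply: long_comb_eq0 => u hu hs; case: (eqVneq (word t u) 0) => // /(size_le u hu); lia.
split; first exact: nonzero_word.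
split; first by split; [exact: top_bindex_valid | exact: ell_top_bindex |
  exact: ell_le_lnd hd | exact: ell_eq_lnd hd | exact: size_le].
split=> [[R1 Rinv]|]; last exact: pow_eq0.
have [f [f_phi f_t]] :=
  univ R idfun (fun=> 0) (fun r x => mulrC r x) (NC_rels_zero _ _ (ltnW hd)).
apply: (gen_ideal_local phi_span f_phi f_t R1 Rinv) => y hy.
by exists (1 + lnd m.+1 d)%N; apply/pow_eq0/ideal_pow_exprn.
Qed.
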